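(* Let $(K,\mathscr T)$ be a stable topological space and $f:K\to L^0$ a stable lower semi-continuous function. If $K$ is stable compact, then there exists $x_0\in K$ such that $f(x_0)=\min_{x\in K}f(x)$, i.e. $f(x_0)\le f(x)$ for all $x\in K$.
   Context: $L^0$: real measurable functions on a probability space modulo a.e. equality, a.e. order; $\bar L^0$ the corresponding extended-real-valued classes. An $L^0$-module $E$ is stable if for every countable measurable partition $(A_k)$ and $(x_k)\subset E$ there is a unique $x=\sum_k1_{A_k}x_k$ with $1_{A_k}x=1_{A_k}x_k$. A nonempty subset is stable if closed under concatenations; for stable $Y_k$, $\sum_k1_{A_k}Y_k=\{\sum_k1_{A_k}y_k:y_k\in Y_k\}$; a nonempty collection of stable sets is stable if closed under this operation. A stable topological space is a stable subset $K$ of a stable $L^0$-module with a topology having a base which is a stable collection of stable sets. $f$ is stable if $f(\sum_k1_{A_k}x_k)=\sum_k1_{A_k}f(x_k)$; lower semi-continuous if $\{x\in K:f(x)\le\eta\}$ is closed for every $\eta\in\bar L^0$. A filter is stable if it has a filter base which is a stable collection of stable sets; $K$ is stable compact if every stable filter on $K$ has a cluster point in $K$. *)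

From Stdlib Require Import Reals.
Open Scope R_scope.

Record ProbSpace := {
  Omega : Type;
  meas : (Omega -> Prop) -> Prop;
  meas_full : meas (fun _ => True);
  meas_compl : forall A, meas A -> meas (fun w => ~ A w);
  meas_union : forall A : nat -> Omega -> Prop,
      (forall n, meas (A n)) -> meas (fun w => exists n, A n w);
  prob : (Omega -> Prop) -> R;
  prob_nonneg : forall A, meas A -> 0 <= prob A;
  prob_full : prob (fun _ => True) = 1;
  prob_sigma_add : forall A : nat -> Omega -> Prop,
      (forall n, meas (A n)) ->
      (forall n m w, n <> m -> A n w -> A m w -> False) ->
      infinite_sum (fun n => prob (A n)) (prob (fun w => exists n, A n w))
}.

Section L0.
Variable Ps : ProbSpace.
Notation Om := (Omega Ps).

Definition ae (p : Om -> Prop) : Prop :=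
  exists N, meas Ps N /\ prob Ps N = 0 /\ forall w, ~ N w -> p w.

Definition measurable_fun (X : Om -> R) : Prop :=
  forall a : R, meas Ps (fun w => X w <= a).

Inductive Rbar := Finite (r : R) | p_infty | m_infty.
Definition Rbar_le (x y : Rbar) : Prop :=
  match x, y with
  | m_infty, _ => True
  | _, p_infty => True
  | p_infty, _ => False
  | _, m_infty => False
  | Finite a, Finite b => a <= b
  end.

Definition measurable_rbar (X : Om -> Rbar) : Prop :=
  forall a : R, meas Ps (fun w => Rbar_le (X w) (Finite a)).

(** L^0 : equivalence classes of measurable real functions modulo a.e. equality *)
Definition is_L0_class (S : (Om -> R) -> Prop) : Prop :=
  exists X, measurable_fun X /\
    forall Y, S Y <-> (measurable_fun Y /\ ae (fun w => X w = Y w)).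

Definition L0 := { S : (Om -> R) -> Prop | is_L0_class S }.

Definition represents (c : L0) (X : Om -> R) : Prop := proj1_sig c X.

Definition L0_le (c d : L0) : Prop :=
  exists X Y, represents c X /\ represents d Y /\ ae (fun w => X w <= Y w).

(** a.e. comparison of an element of L^0 with an element of \bar L^0
    (given by any measurable extended-real representative) *)
Definition L0_le_bar (c : L0) (eta : Om -> Rbar) : Prop :=
  exists X, represents c X /\ ae (fun w => Rbar_le (Finite (X w)) (eta w)).

Definition L0_add_rel (a b c : L0) : Prop :=
  exists X Y Z, represents a X /\ represents b Y /\ represents c Z /\
    forall w, Z w = X w + Y w.
Definition L0_mul_rel (a b c : L0) : Prop :=
  exists X Y Z, represents a X /\ represents b Y /\ represents c Z /\
    forall w, Z w = X w * Y w.
Definition L0_is_one (o : L0) : Prop := represents o (fun _ => 1).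

Definition is_ind (A : Om -> Prop) (c : L0) : Prop :=
  exists X, represents c X /\ forall w, (A w -> X w = 1) /\ (~ A w -> X w = 0).

Definition partition (A : nat -> Om -> Prop) : Prop :=
  (forall k, meas Ps (A k)) /\
  (forall k l w, k <> l -> A k w -> A l w -> False) /\
  (forall w, exists k, A k w).

Record StableL0Module := {
  E : Type;
  add : E -> E -> E;
  zero : E;
  opp : E -> E;
  smul : L0 -> E -> E;
  addA : forall x y z, add x (add y z) = add (add x y) z;
  addC : forall x y, add x y = add y x;
  add0 : forall x, add zero x = x;
  addN : forall x, add (opp x) x = zero;
  smulDr : forall a x y, smul a (add x y) = add (smul a x) (smul a y);
  smulDl : forall a b c x, L0_add_rel a b c -> smul c x = add (smul a x) (smul b x);
  smulA : forall a b c x, L0_mul_rel a b c -> smul c x = smul a (smul b x);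
  smul1 : forall o x, L0_is_one o -> smul o x = x;
  stable_mod : forall A (xs : nat -> E), partition A ->
    exists! x, forall k c, is_ind (A k) c -> smul c x = smul c (xs k)
}.

Section Stable.
Variable M : StableL0Module.
Notation EE := (E M).

(** x = sum_k 1_{A_k} xs_k *)
Definition is_concat (A : nat -> Om -> Prop) (xs : nat -> EE) (x : EE) : Prop :=
  forall k c, is_ind (A k) c -> smul M c x = smul M c (xs k).

Definition stable_set (Y : EE -> Prop) : Prop :=
  (exists y, Y y) /\
  forall A xs x, partition A -> (forall k, Y (xs k)) -> is_concat A xs x -> Y x.

Definition concat_sets (A : nat -> Om -> Prop) (Ys : nat -> EE -> Prop) : EE -> Prop :=
  fun x => exists xs, (forall k, Ys k (xs k)) /\ is_concat A xs x.

Definition stable_coll (C : (EE -> Prop) -> Prop) : Prop :=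
  (exists Y, C Y) /\ (forall Y, C Y -> stable_set Y) /\
  forall A Ys, partition A -> (forall k, C (Ys k)) -> C (concat_sets A Ys).

Definition topology_on (K : EE -> Prop) (T : (EE -> Prop) -> Prop) : Prop :=
  T K /\
  (forall U, T U -> forall x, U x -> K x) /\
  (forall F : (EE -> Prop) -> Prop, (forall U, F U -> T U) ->
      T (fun x => exists U, F U /\ U x)) /\
  (forall U V, T U -> T V -> T (fun x => U x /\ V x)).

Definition is_base (T B : (EE -> Prop) -> Prop) : Prop :=
  (forall b, B b -> T b) /\
  forall U x, T U -> U x -> exists b, B b /\ b x /\ forall y, b y -> U y.

Definition stable_top_space (K : EE -> Prop) (T : (EE -> Prop) -> Prop) : Prop :=
  stable_set K /\ topology_on K T /\ exists B, is_base T B /\ stable_coll B.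

Definition closed_in (K : EE -> Prop) (T : (EE -> Prop) -> Prop) (S : EE -> Prop) : Prop :=
  T (fun x => K x /\ ~ S x).

Definition filter_on (K : EE -> Prop) (F : (EE -> Prop) -> Prop) : Prop :=
  F K /\
  (forall S, F S -> forall x, S x -> K x) /\
  (forall S S', F S -> (forall x, S x -> S' x) -> (forall x, S' x -> K x) -> F S') /\
  (forall S S', F S -> F S' -> F (fun x => S x /\ S' x)) /\
  (forall S, F S -> exists x, S x).

Definition filter_base (F B : (EE -> Prop) -> Prop) : Prop :=
  (forall b, B b -> F b) /\ forall S, F S -> exists b, B b /\ forall x, b x -> S x.

Definition stable_filter (K : EE -> Prop) (F : (EE -> Prop) -> Prop) : Prop :=
  filter_on K F /\ exists B, filter_base F B /\ stable_coll B.

Definition cluster_point (T F : (EE -> Prop) -> Prop) (x : EE) : Prop :=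
  forall U, T U -> U x -> forall S, F S -> exists y, U y /\ S y.

Definition stable_compact (K : EE -> Prop) (T : (EE -> Prop) -> Prop) : Prop :=
  forall F, stable_filter K F -> exists x, K x /\ cluster_point T F x.

(** stable functions K -> L^0 : f(sum 1_{A_k} x_k) = sum 1_{A_k} f(x_k) *)
Definition stable_fun (K : EE -> Prop) (f : EE -> L0) : Prop :=
  forall A xs x, partition A -> (forall k, K (xs k)) -> is_concat A xs x ->
    forall k c a b, is_ind (A k) c ->
      L0_mul_rel c (f x) a -> L0_mul_rel c (f (xs k)) b -> a = b.

Definition lsc (K : EE -> Prop) (T : (EE -> Prop) -> Prop) (f : EE -> L0) : Prop :=
  forall eta : Om -> Rbar, measurable_rbar eta ->
    closed_in K T (fun x => K x /\ L0_le_bar (f x) eta).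

End Stable.
End L0.

From Stdlib Require Import Reals Lra Lia ZArith Classical ClassicalEpsilon FunctionalExtensionality PropExtensionality.
Open Scope R_scope.

(* The sublevel sets [{x in K | f x <= f y}], [y in K], are stable because [f] is stable,
   and downward directed: the concatenation of [y1] and [y2] along the event
   [{f y1 <= f y2}] realises [min (f y1) (f y2)]. Hence they generate a stable filter on [K],
   which has a cluster point [x0] by stable compactness. If [f x0 <= f y] failed, lower
   semicontinuity at the level [f y] would give an open neighbourhood of [x0] missing the
   sublevel set of [y], a member of the filter. *)

Lemma pred_ext {T} (P Q : T -> Prop) : (forall w, P w <-> Q w) -> P = Q.
Proof. intro H; apply functional_extensionality; intro w; apply propositional_extensionality; auto. Qed.

Section ProbabilityFacts.
Variable Ps : ProbSpace.
Notation Om := (Omega Ps).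

Lemma meas_empty : meas Ps (fun _ : Om => False).
Proof.
  replace (fun _ : Om => False) with (fun w : Om => ~ (fun _ => True) w)
    by (apply pred_ext; tauto).
  apply meas_compl, meas_full.
Qed.

Lemma meas_union2 (A B : Om -> Prop) :
  meas Ps A -> meas Ps B -> meas Ps (fun w => A w \/ B w).
Proof.
  intros HA HB.
  replace (fun w => A w \/ B w) with (fun w => exists n, (match n with O => A | _ => B end) w).
  - apply meas_union. intros [|n]; auto.
  - apply pred_ext; intro w; split.
    + intros [[|n] H]; auto.
    + intros [H|H]; [exists O | exists 1%nat]; auto.
Qed.

Lemma meas_inter (A B : Om -> Prop) :
  meas Ps A -> meas Ps B -> meas Ps (fun w => A w /\ B w).
Proof.
  intros HA HB.
  replace (fun w => A w /\ B w) with (fun w => ~ ((fun w => ~ A w) w \/ (fun w => ~ B w) w)).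
  - apply meas_compl, meas_union2; apply meas_compl; auto.
  - apply pred_ext; intro w; destruct (classic (A w)), (classic (B w)); tauto.
Qed.

Lemma prob_empty : prob Ps (fun _ : Om => False) = 0.
Proof.
  pose proof (prob_sigma_add Ps (fun _ _ => False) (fun _ => meas_empty)
                (fun n m w _ H _ => H)) as Hsum.
  replace (fun w : Om => exists n : nat, (fun _ _ => False) n w) with (fun _ : Om => False)
    in Hsum by (apply pred_ext; intro w; split; [tauto | intros [_ []]]).
  cbv beta in Hsum. set (p := prob Ps _) in Hsum.
  (* the constant series p + p + ... can only sum to p if p = 0 *)
  destruct (Req_dec p 0) as [|Hp]; [assumption | exfalso].
  assert (Heps : Rabs p / 2 > 0) by (apply Rabs_pos_lt in Hp; lra).
  destruct (Hsum _ Heps) as [N HN].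
  pose proof (HN N (le_n _)) as H1; pose proof (HN (S N) (le_S _ _ (le_n _))) as H2.
  simpl sum_f_R0 in H2. unfold Rdist in *.
  set (s := sum_f_R0 _ N) in *.
  split_Rabs; lra.
Qed.

Lemma prob_add2 (A B : Om -> Prop) :
  meas Ps A -> meas Ps B -> (forall w, A w -> B w -> False) ->
  prob Ps (fun w => A w \/ B w) = prob Ps A + prob Ps B.
Proof.
  intros HA HB Hdisj.
  set (G := fun n => match n with O => A | 1%nat => B | _ => fun _ : Om => False end).
  assert (HG : forall n, meas Ps (G n)) by (intros [|[|n]]; simpl; auto using meas_empty).
  assert (HGdisj : forall n m w, n <> m -> G n w -> G m w -> False)
    by (intros [|[|n]] [|[|m]] w Hnm; simpl; try tauto; intros; eauto).
  pose proof (prob_sigma_add Ps G HG HGdisj) as Hsum.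
  replace (fun w => exists n, G n w) with (fun w => A w \/ B w) in Hsum.
  2:{ apply pred_ext; intro w; split.
      - intros [Ha|Hb]; [exists O|exists 1%nat]; auto.
      - intros [[|[|n]] Hn]; simpl in Hn; tauto. }
  eapply uniqueness_sum; [exact Hsum|].
  assert (Hpartial : forall n, sum_f_R0 (fun n => prob Ps (G n)) (S n) = prob Ps A + prob Ps B).
  { induction n as [|n IH]; simpl; [reflexivity|]. simpl in IH. rewrite IH, prob_empty. lra. }
  intros eps Heps. exists 1%nat. intros [|n] Hn; [lia|]. rewrite Hpartial. unfold Rdist.
  rewrite Rminus_diag, Rabs_R0. lra.
Qed.

Lemma prob_mono (A B : Om -> Prop) :
  meas Ps A -> meas Ps B -> (forall w, A w -> B w) -> prob Ps A <= prob Ps B.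
Proof.
  intros HA HB Hsub.
  assert (HBA : meas Ps (fun w => B w /\ ~ A w)) by (apply meas_inter; auto using meas_compl).
  replace B with (fun w => A w \/ (fun w => B w /\ ~ A w) w).
  - rewrite prob_add2; auto; [|intros w Ha [_ Hn]; tauto].
    pose proof (prob_nonneg Ps _ HBA). lra.
  - apply pred_ext; intro w; destruct (classic (A w)); firstorder.
Qed.

Definition disjointed (N : nat -> Om -> Prop) (n : nat) (w : Om) : Prop :=
  N n w /\ ~ exists m, (m < n)%nat /\ N m w.

Lemma disjointed_meas N n : (forall n, meas Ps (N n)) -> meas Ps (disjointed N n).
Proof.
  intro HN. apply meas_inter; [apply HN|]. apply meas_compl.
  apply (meas_union Ps (fun m w => (m < n)%nat /\ N m w)). intro m.
  destruct (lt_dec m n) as [Hl|Hl].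
  - replace (fun w => (m < n)%nat /\ N m w) with (N m) by (apply pred_ext; intuition). apply HN.
  - replace (fun w => (m < n)%nat /\ N m w) with (fun _ : Om => False)
      by (apply pred_ext; intuition). apply meas_empty.
Qed.

Lemma disjointed_disjoint N n m w :
  n <> m -> disjointed N n w -> disjointed N m w -> False.
Proof.
  intros Hnm [Hn Hn'] [Hm Hm']. destruct (Nat.lt_total n m) as [Hl|[He|Hl]]; eauto.
Qed.

Lemma disjointed_union N :
  (fun w => exists n, disjointed N n w) = (fun w => exists n, N n w).
Proof.
  apply pred_ext; intro w; split.
  - intros [n [Hn _]]; eauto.
  - intros [n Hn]. revert Hn. induction n as [n IH] using (well_founded_induction lt_wf). intro Hn.
    destruct (classic (exists m, (m < n)%nat /\ N m w)) as [[m [Hm1 Hm2]]|Hfirst].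
    + exact (IH m Hm1 Hm2).
    + exists n; split; auto.
Qed.

Lemma null_union (N : nat -> Om -> Prop) :
  (forall n, meas Ps (N n)) -> (forall n, prob Ps (N n) = 0) ->
  prob Ps (fun w => exists n, N n w) = 0.
Proof.
  intros Hmeas Hnull.
  assert (Hdnull : forall n, prob Ps (disjointed N n) = 0).
  { intro n. pose proof (prob_mono _ _ (disjointed_meas N n Hmeas) (Hmeas n) (fun w H => proj1 H)).
    pose proof (prob_nonneg Ps _ (disjointed_meas N n Hmeas)). rewrite Hnull in *. lra. }
  pose proof (prob_sigma_add Ps _ (fun n => disjointed_meas N n Hmeas) (disjointed_disjoint N)) as Hsum.
  rewrite disjointed_union in Hsum.
  replace (fun n => prob Ps (disjointed N n)) with (fun _ : nat => 0) in Hsum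
    by (apply functional_extensionality; auto).
  eapply uniqueness_sum; [exact Hsum|].
  intros eps Heps. exists O. intros n _. unfold Rdist.
  replace (sum_f_R0 (fun _ => 0) n) with 0 by (induction n; simpl; lra).
  rewrite Rminus_0_r, Rabs_R0. lra.
Qed.

Lemma ae_true : ae Ps (fun _ => True).
Proof. exists (fun _ => False). split; [apply meas_empty | split; [apply prob_empty | auto]]. Qed.

Lemma ae_mono (P Q : Om -> Prop) : ae Ps P -> (forall w, P w -> Q w) -> ae Ps Q.
Proof. intros [N [H1 [H2 H3]]] H. exists N; repeat split; auto. Qed.

Lemma ae_forall (P : nat -> Om -> Prop) :
  (forall n, ae Ps (P n)) -> ae Ps (fun w => forall n, P n w).
Proof.
  intro H. destruct (choice (fun n N => meas Ps N /\ prob Ps N = 0 /\ forall w, ~ N w -> P n w) H)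
    as [N HN].
  exists (fun w => exists n, N n w).
  split; [apply meas_union; apply HN | split; [apply null_union; apply HN |]].
  intros w Hw n. apply HN. intro Hn; apply Hw; eauto.
Qed.

Lemma ae_and (P Q : Om -> Prop) : ae Ps P -> ae Ps Q -> ae Ps (fun w => P w /\ Q w).
Proof.
  intros HP HQ.
  eapply ae_mono; [apply (ae_forall (fun n => match n with O => P | _ => Q end)); intros [|n]; auto|].
  intros w Hw. exact (conj (Hw O) (Hw 1%nat)).
Qed.

Lemma ae_of_partition (A : nat -> Om -> Prop) (P : Om -> Prop) :
  partition Ps A -> (forall k, ae Ps (fun w => A k w -> P w)) -> ae Ps P.
Proof.
  intros HA H. eapply ae_mono; [apply (ae_forall _ H)|]. intros w Hw.
  destruct (proj2 (proj2 HA) w) as [k Hk]. exact (Hw k Hk).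
Qed.

End ProbabilityFacts.

Section MeasurableFunctions.
Variable Ps : ProbSpace.
Notation Om := (Omega Ps).

Lemma measurable_const (c : R) : measurable_fun Ps (fun _ => c).
Proof.
  intro a. destruct (Rle_dec c a) as [H|H].
  - replace (fun _ : Om => c <= a) with (fun _ : Om => True) by (apply pred_ext; tauto).
    apply meas_full.
  - replace (fun _ : Om => c <= a) with (fun _ : Om => False) by (apply pred_ext; tauto).
    apply meas_empty.
Qed.

Definition piecewise (A : Om -> Prop) (g h : Om -> R) (w : Om) : R :=
  if excluded_middle_informative (A w) then g w else h w.

Lemma measurable_piecewise A g h :
  meas Ps A -> measurable_fun Ps g -> measurable_fun Ps h ->
  measurable_fun Ps (piecewise A g h).
Proof.
  intros HA Hg Hh a.
  replace (fun w => piecewise A g h w <= a) with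
    (fun w => (fun w => A w /\ g w <= a) w \/ (fun w => ~ A w /\ h w <= a) w).
  - apply meas_union2; apply meas_inter; auto using meas_compl.
  - apply pred_ext; intro w. unfold piecewise.
    destruct (excluded_middle_informative (A w)); tauto.
Qed.

Lemma meas_gt (X : Om -> R) (a : R) : measurable_fun Ps X -> meas Ps (fun w => a < X w).
Proof.
  intro H. replace (fun w => a < X w) with (fun w => ~ (X w <= a)).
  - apply meas_compl, H.
  - apply pred_ext; intro w; split; intro; lra.
Qed.

End MeasurableFunctions.

(* The rationals are enumerated as [± k / (m + 1)] with [m k : nat], so that unions
   over them are countable unions indexed by [nat]. *)
Lemma signed_ratio_between (a b : R) : a < b -> exists m k : nat,
  let q := INR k / INR (S m) in (a <= q /\ q < b) \/ (a <= - q /\ - q < b).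
Proof.
  intro Hab. destruct (archimed_cor1 (b - a)) as [[|m] [Hm Hm0]]; [lra | lia |].
  exists m. set (n := INR (S m)) in *.
  assert (Hn : 0 < n) by (apply lt_0_INR; lia).
  destruct (archimed (a * n)) as [H1 H2].
  set (z := up (a * n)) in *.
  assert (Hlo : a < IZR z / n).
  { apply (Rmult_lt_reg_r n); auto. unfold Rdiv. rewrite Rmult_assoc, Rinv_l; lra. }
  assert (Hhi : IZR z / n < b).
  { apply (Rmult_lt_reg_r n); auto. unfold Rdiv. rewrite Rmult_assoc, Rinv_l by lra.
    assert (/ n * n = 1) by (apply Rinv_l; lra).
    assert (1 < (b - a) * n) by (replace 1 with (/ n * n) by auto; apply Rmult_lt_compat_r; auto).
    nra. }
  exists (Z.abs_nat z). cbv zeta.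
  rewrite INR_IZR_INZ, Zabs2Nat.id_abs.
  destruct (Z.le_ge_cases 0 z) as [Hz|Hz].
  - left. rewrite Z.abs_eq by auto. unfold n in *. lra.
  - right. rewrite Z.abs_neq, opp_IZR by lia. unfold n, Rdiv in *.
    rewrite Ropp_mult_distr_l_reverse, Ropp_involutive. lra.
Qed.

Lemma meas_le_funs (Ps : ProbSpace) (X Y : Omega Ps -> R) :
  measurable_fun Ps X -> measurable_fun Ps Y -> meas Ps (fun w => X w <= Y w).
Proof.
  intros HX HY.
  set (q := fun m k => INR k / INR (S m)).
  replace (fun w => X w <= Y w) with
    (fun w => ~ (exists m, (fun m w => exists k, (fun k w =>
        (fun w => (fun w => Y w <= q m k) w /\ (fun w => q m k < X w) w) w \/
        (fun w => (fun w => Y w <= - q m k) w /\ (fun w => - q m k < X w) w) w) k w) m w)).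
  - apply meas_compl. apply meas_union; intro m. apply meas_union; intro k.
    apply meas_union2; apply meas_inter; auto using meas_gt.
  - apply pred_ext; intro w; split.
    + intro H. destruct (Rle_dec (X w) (Y w)) as [Hl|Hl]; auto. exfalso; apply H.
      destruct (signed_ratio_between (Y w) (X w)) as [m [k Hk]]; [lra|].
      exists m, k. unfold q. lra.
    + intros H [m [k [[H1 H2]|[H1 H2]]]]; lra.
Qed.

Section L0Classes.
Variable Ps : ProbSpace.
Notation Om := (Omega Ps).

Definition L0_of (X : Om -> R) (HX : measurable_fun Ps X) : L0 Ps :=
  exist _ (fun Y => measurable_fun Ps Y /\ ae Ps (fun w => X w = Y w))
    (ex_intro _ X (conj HX (fun Y => iff_refl _))).

Lemma represents_L0_of X HX : represents Ps (L0_of X HX) X.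
Proof. split; auto. eapply ae_mono; [apply ae_true | auto]. Qed.

Lemma represents_exists (c : L0 Ps) : exists X, represents Ps c X.
Proof.
  destruct (proj2_sig c) as [X [HX HS]]. exists X. apply HS. split; auto.
  eapply ae_mono; [apply ae_true | auto].
Qed.

Lemma represents_measurable (c : L0 Ps) X : represents Ps c X -> measurable_fun Ps X.
Proof. intro H. destruct (proj2_sig c) as [Z [HZ HS]]. apply HS in H. apply H. Qed.

Lemma represents_ae_eq (c : L0 Ps) X Y :
  represents Ps c X -> represents Ps c Y -> ae Ps (fun w => X w = Y w).
Proof.
  intros H1 H2. destruct (proj2_sig c) as [Z [HZ HS]]. apply HS in H1. apply HS in H2.
  eapply ae_mono; [apply (ae_and _ _ _ (proj2 H1) (proj2 H2))|]. intros w [a b]; congruence.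
Qed.

Lemma L0_le_represents (c d : L0 Ps) X Y :
  L0_le Ps c d -> represents Ps c X -> represents Ps d Y -> ae Ps (fun w => X w <= Y w).
Proof.
  intros [X' [Y' [HX' [HY' Hle]]]] HX HY.
  pose proof (represents_ae_eq _ _ _ HX HX') as EX.
  pose proof (represents_ae_eq _ _ _ HY HY') as EY.
  eapply ae_mono; [apply (ae_and _ _ _ Hle (ae_and _ _ _ EX EY))|].
  intros w [a [b e]]. rewrite b, e; auto.
Qed.

End L0Classes.

Section Indicators.
Variable Ps : ProbSpace.
Variables (A : Omega Ps -> Prop) (HA : meas Ps A).

Definition indicator : L0 Ps :=
  L0_of Ps _ (measurable_piecewise Ps A _ _ HA (measurable_const Ps 1) (measurable_const Ps 0)).

Definition restrict (c : L0 Ps) (X : Omega Ps -> R) (HX : represents Ps c X) : L0 Ps :=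
  L0_of Ps _ (measurable_piecewise Ps A _ _ HA (represents_measurable Ps c X HX)
                (measurable_const Ps 0)).

Lemma is_ind_indicator : is_ind Ps A indicator.
Proof.
  eexists. split; [apply represents_L0_of|]. intro w; unfold piecewise.
  destruct excluded_middle_informative; tauto.
Qed.

Lemma indicator_mul c X HX : L0_mul_rel Ps indicator c (restrict c X HX).
Proof.
  do 3 eexists. split; [apply represents_L0_of | split; [exact HX | split; [apply represents_L0_of|]]].
  intro w; unfold piecewise; destruct excluded_middle_informative; ring.
Qed.

Lemma restrict_ae_eq c X HX d Y HY :
  restrict c X HX = restrict d Y HY -> ae Ps (fun w => A w -> X w = Y w).
Proof.
  intro Heq. pose proof (represents_L0_of Ps _
    (measurable_piecewise Ps A _ _ HA (represents_measurable Ps d Y HY) (measurable_const Ps 0))) as H.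
  fold (restrict d Y HY) in H. rewrite <- Heq in H. destruct H as [_ H].
  eapply ae_mono; [exact H|]. intros w Hw Hw'. unfold piecewise in Hw.
  destruct excluded_middle_informative; [exact Hw | contradiction].
Qed.

End Indicators.

Section Sublevels.
Variable Ps : ProbSpace.
Variable M : StableL0Module Ps.
Variable K : E Ps M -> Prop.
Variable f : E Ps M -> L0 Ps.
Hypothesis K_stable : stable_set Ps M K.
Hypothesis f_stable : stable_fun Ps M K f.
Notation Om := (Omega Ps).
Notation EE := (E Ps M).

Lemma stable_set_concat_exists A xs :
  partition Ps A -> (forall k, K (xs k)) -> exists x, K x /\ is_concat Ps M A xs x.
Proof.
  intros HA HK. destruct (stable_mod Ps M A xs HA) as [x [Hx _]].
  exists x. split; [eapply (proj2 K_stable) | ]; eauto.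
Qed.

Lemma stable_fun_ae_on_piece A xs x k X Xk :
  partition Ps A -> (forall k, K (xs k)) -> is_concat Ps M A xs x ->
  represents Ps (f x) X -> represents Ps (f (xs k)) Xk ->
  ae Ps (fun w => A k w -> X w = Xk w).
Proof.
  intros HA HK Hc HX HXk.
  assert (HAk : meas Ps (A k)) by apply HA.
  apply (restrict_ae_eq Ps (A k) HAk (f x) X HX (f (xs k)) Xk HXk).
  apply (f_stable A xs x HA HK Hc k (indicator Ps (A k) HAk));
    auto using is_ind_indicator, indicator_mul.
Qed.

Definition split2 (A : Om -> Prop) (n : nat) : Om -> Prop :=
  match n with O => A | 1%nat => fun w => ~ A w | _ => fun _ => False end.

Definition seq2 (u v : EE) (n : nat) : EE := match n with O => u | _ => v end.

Lemma split2_partition A : meas Ps A -> partition Ps (split2 A).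
Proof.
  intro HA. split; [|split].
  - intros [|[|n]]; simpl; auto using meas_compl, meas_empty.
  - intros [|[|n]] [|[|m]] w Hnm; simpl; try tauto; intros; eauto.
  - intro w. destruct (classic (A w)); [exists O | exists 1%nat]; simpl; auto.
Qed.

Lemma stable_glue A u v : meas Ps A -> K u -> K v -> exists z, K z /\
  is_concat Ps M (split2 A) (seq2 u v) z /\
  forall Z U V, represents Ps (f z) Z -> represents Ps (f u) U -> represents Ps (f v) V ->
    ae Ps (fun w => (A w -> Z w = U w) /\ (~ A w -> Z w = V w)).
Proof.
  intros HA Hu Hv.
  assert (HK2 : forall k, K (seq2 u v k)) by (intros [|k]; simpl; auto).
  destruct (stable_set_concat_exists (split2 A) (seq2 u v) (split2_partition A HA) HK2)
    as [z [Hz Hc]].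
  exists z. split; [exact Hz | split; [exact Hc|]]. intros Z U V HZ HU HV.
  pose proof (stable_fun_ae_on_piece _ _ z O Z U (split2_partition A HA) HK2 Hc HZ HU) as H0.
  pose proof (stable_fun_ae_on_piece _ _ z 1%nat Z V (split2_partition A HA) HK2 Hc HZ HV) as H1.
  eapply ae_mono; [apply (ae_and _ _ _ H0 H1)|]. simpl. tauto.
Qed.


Definition sublevel (y : EE) (x : EE) : Prop := K x /\ L0_le Ps (f x) (f y).

Definition is_sublevel (S : EE -> Prop) : Prop := exists y, K y /\ S = sublevel y.

Definition sublevel_filter (S : EE -> Prop) : Prop :=
  (forall x, S x -> K x) /\ exists y, K y /\ forall x, sublevel y x -> S x.

Lemma sublevel_refl y : K y -> sublevel y y.
Proof.
  intro Hy. split; [exact Hy|]. destruct (represents_exists Ps (f y)) as [Y HY].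
  exists Y, Y. split; [exact HY | split; [exact HY|]].
  eapply ae_mono; [apply ae_true|]. intros; lra.
Qed.

Lemma sublevel_directed y1 y2 : K y1 -> K y2 -> exists y, K y /\
  (forall x, sublevel y x -> sublevel y1 x) /\ (forall x, sublevel y x -> sublevel y2 x).
Proof.
  intros H1 H2.
  destruct (represents_exists Ps (f y1)) as [Y1 HY1].
  destruct (represents_exists Ps (f y2)) as [Y2 HY2].
  assert (HA : meas Ps (fun w => Y1 w <= Y2 w))
    by (apply meas_le_funs; eauto using represents_measurable).
  destruct (stable_glue _ y1 y2 HA H1 H2) as [z [Hz [_ Hglue]]].
  destruct (represents_exists Ps (f z)) as [Z HZ].
  specialize (Hglue Z Y1 Y2 HZ HY1 HY2).
  exists z. split; [exact Hz | split]; intros x [Hx Hle]; split; auto;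
    destruct (represents_exists Ps (f x)) as [X HX];
    pose proof (L0_le_represents _ _ _ _ _ Hle HX HZ) as HXZ.
  - exists X, Y1. split; [exact HX | split; [exact HY1|]].
    eapply ae_mono; [apply (ae_and _ _ _ HXZ Hglue)|].
    intros w [a [b c]]. destruct (Rle_dec (Y1 w) (Y2 w)) as [d|d].
    + rewrite <- b; auto.
    + specialize (c d). lra.
  - exists X, Y2. split; [exact HX | split; [exact HY2|]].
    eapply ae_mono; [apply (ae_and _ _ _ HXZ Hglue)|].
    intros w [a [b c]]. destruct (Rle_dec (Y1 w) (Y2 w)) as [d|d].
    + specialize (b d). lra.
    + rewrite <- c; auto.
Qed.

Lemma sublevel_stable y : K y -> stable_set Ps M (sublevel y).
Proof.
  intro Hy. split; [exists y; apply sublevel_refl; exact Hy|].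
  intros A xs x HA Hxs Hc.
  split; [eapply (proj2 K_stable); eauto; intro k; apply Hxs|].
  destruct (represents_exists Ps (f x)) as [X HX].
  destruct (represents_exists Ps (f y)) as [Y HY].
  exists X, Y. split; [exact HX | split; [exact HY|]].
  apply (ae_of_partition _ A); [exact HA|]. intro k.
  destruct (represents_exists Ps (f (xs k))) as [Xk HXk].
  pose proof (stable_fun_ae_on_piece A xs x k X Xk HA
                (fun k => proj1 (Hxs k)) Hc HX HXk) as H1.
  pose proof (L0_le_represents _ _ _ _ _ (proj2 (Hxs k)) HXk HY) as H2.
  eapply ae_mono; [apply (ae_and _ _ _ H1 H2)|]. intros w [a b] c. rewrite a; auto.
Qed.

Lemma concat_sublevel_sub A ys y x :
  partition Ps A -> (forall k, K (ys k)) -> is_concat Ps M A ys y ->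
  concat_sets Ps M A (fun k => sublevel (ys k)) x -> sublevel y x.
Proof.
  intros HA HK Hc [xs [Hxs Hcx]].
  split; [apply (proj2 K_stable A xs x HA (fun k => proj1 (Hxs k)) Hcx)|].
  destruct (represents_exists Ps (f x)) as [X HX].
  destruct (represents_exists Ps (f y)) as [Y HY].
  exists X, Y. split; [exact HX | split; [exact HY|]].
  apply (ae_of_partition _ A); [exact HA|]. intro k.
  destruct (represents_exists Ps (f (xs k))) as [Xk HXk].
  destruct (represents_exists Ps (f (ys k))) as [Yk HYk].
  pose proof (stable_fun_ae_on_piece A xs x k X Xk HA
                (fun k => proj1 (Hxs k)) Hcx HX HXk) as H1.
  pose proof (stable_fun_ae_on_piece A ys y k Y Yk HA HK Hc HY HYk)
    as H2.
  pose proof (L0_le_represents _ _ _ _ _ (proj2 (Hxs k)) HXk HYk) as H3.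
  eapply ae_mono; [apply (ae_and _ _ _ H1 (ae_and _ _ _ H2 H3))|].
  intros w [a [b c]] d. rewrite a, b; auto.
Qed.

(* [x] is the concatenation of the [z k := 1_{A k} x + 1_{~ A k} (ys k)], and [z k] lies in
   the sublevel set of [ys k]. *)
Lemma sublevel_sub_concat A ys y x :
  partition Ps A -> (forall k, K (ys k)) -> is_concat Ps M A ys y ->
  sublevel y x -> concat_sets Ps M A (fun k => sublevel (ys k)) x.
Proof.
  intros HA HK Hc [Hx Hle].
  destruct (choice (fun k z => K z /\ is_concat Ps M (split2 (A k)) (seq2 x (ys k)) z /\
       forall Z U V, represents Ps (f z) Z -> represents Ps (f x) U ->
         represents Ps (f (ys k)) V ->
         ae Ps (fun w => (A k w -> Z w = U w) /\ (~ A k w -> Z w = V w))))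
    as [zs Hzs].
  { intro k. apply (stable_glue); auto. apply HA. }
  exists zs. split.
  - intro k. destruct (Hzs k) as [Hzk [_ Hglue]]. split; [exact Hzk|].
    destruct (represents_exists Ps (f (zs k))) as [Z HZ].
    destruct (represents_exists Ps (f x)) as [X HX].
    destruct (represents_exists Ps (f y)) as [Y HY].
    destruct (represents_exists Ps (f (ys k))) as [Yk HYk].
    exists Z, Yk. split; [exact HZ | split; [exact HYk|]].
    pose proof (Hglue Z X Yk HZ HX HYk) as H1.
    pose proof (stable_fun_ae_on_piece A ys y k Y Yk HA HK Hc HY HYk)
      as H2.
    pose proof (L0_le_represents _ _ _ _ _ Hle HX HY) as H3.
    eapply ae_mono; [apply (ae_and _ _ _ H1 (ae_and _ _ _ H2 H3))|].
    intros w [[a b] [c d]]. destruct (classic (A k w)) as [e|e].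
    + rewrite a, <- c; auto.
    + rewrite b; auto; lra.
  - intros k c Hck. destruct (Hzs k) as [_ [Hcz _]]. symmetry. exact (Hcz O c Hck).
Qed.

Lemma sublevel_stable_coll : stable_coll Ps M is_sublevel.
Proof.
  destruct (proj1 K_stable) as [y0 Hy0].
  split; [exists (sublevel y0), y0; auto | split].
  - intros b [y [Hy ->]]. apply sublevel_stable; exact Hy.
  - intros A Ys HA HYs.
    destruct (choice (fun k y => K y /\ Ys k = sublevel y) HYs) as [ys Hys].
    replace Ys with (fun k => sublevel (ys k))
      by (apply functional_extensionality; intro k; symmetry; apply Hys).
    destruct (stable_set_concat_exists A ys HA (fun k => proj1 (Hys k)))
      as [y [Hy Hcy]].
    exists y. split; [exact Hy|]. apply pred_ext; intro x; split.
    + apply concat_sublevel_sub; auto. intro k; apply Hys.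
    + apply sublevel_sub_concat; auto. intro k; apply Hys.
Qed.

Lemma sublevel_filter_on : filter_on Ps M K sublevel_filter.
Proof.
  destruct (proj1 K_stable) as [y0 Hy0].
  split; [|split; [|split; [|split]]].
  - split; [auto|]. exists y0; split; [exact Hy0|]. intros x []; auto.
  - intros S [H _]; exact H.
  - intros S S' [_ [y [Hy H]]] Hsub HK. split; [exact HK|]. exists y; split; auto.
  - intros S S' [H1 [y1 [Hy1 H1']]] [H2 [y2 [Hy2 H2']]].
    split; [intros x [a _]; auto|].
    destruct (sublevel_directed y1 y2 Hy1 Hy2) as [y [Hy [Ha Hb]]].
    exists y; split; auto.
  - intros S [_ [y [Hy H]]]. exists y. apply H, sublevel_refl, Hy.
Qed.

Lemma sublevel_filter_stable : stable_filter Ps M K sublevel_filter.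
Proof.
  split; [exact sublevel_filter_on|].
  exists is_sublevel. split; [split | exact sublevel_stable_coll].
  - intros b [y [Hy ->]]. split; [intros x []; auto|]. exists y; auto.
  - intros S [_ [y [Hy H]]]. exists (sublevel y). split; [exists y; auto | exact H].
Qed.

Lemma sublevel_cluster_point_minimizes (T : (EE -> Prop) -> Prop) x0 :
  lsc Ps M K T f -> K x0 -> cluster_point Ps M T sublevel_filter x0 ->
  forall y, K y -> L0_le Ps (f x0) (f y).
Proof.
  intros Hlsc Hx0 Hcl y Hy.
  destruct (classic (L0_le Ps (f x0) (f y))) as [H|Hnot]; [exact H | exfalso].
  destruct (represents_exists Ps (f y)) as [Y HY].
  assert (Hopen : T (fun x => K x /\ ~ (K x /\ L0_le_bar Ps (f x) (fun w => Finite (Y w)))))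
    by (apply Hlsc; intro a; apply (represents_measurable Ps (f y)); exact HY).
  assert (HFy : sublevel_filter (sublevel y))
    by (split; [intros x []; auto | exists y; split; auto]).
  destruct (Hcl _ Hopen) with (S := sublevel y) as [x [[Hx Hnle] [_ Hle]]]; [|exact HFy|].
  - split; [exact Hx0|]. intros [_ [X [HX Hae]]]. apply Hnot. exists X, Y; auto.
  - apply Hnle. split; [exact Hx|]. destruct (represents_exists Ps (f x)) as [X HX].
    exists X. split; [exact HX|].
    eapply ae_mono; [apply (L0_le_represents _ _ _ _ _ Hle HX HY)|]. auto.
Qed.

End Sublevels.

Theorem theorem5 (Ps : ProbSpace) (M : StableL0Module Ps)
  (K : E Ps M -> Prop) (T : (E Ps M -> Prop) -> Prop) (f : E Ps M -> L0 Ps) :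
  stable_top_space Ps M K T ->
  stable_fun Ps M K f ->
  lsc Ps M K T f ->
  stable_compact Ps M K T ->
  exists x0, K x0 /\ forall x, K x -> L0_le Ps (f x0) (f x).
Proof.
  intros [K_stable _] f_stable f_lsc K_compact.
  destruct (K_compact _ (sublevel_filter_stable Ps M K f K_stable f_stable)) as [x0 [Hx0 Hcl]].
  exists x0. split; [exact Hx0|].
  exact (sublevel_cluster_point_minimizes Ps M K f T x0 f_lsc Hx0 Hcl).
Qed.
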